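(* Let $g>0$, $p_0<p_1<0$, $[\![\rho]\!]<0$, $\Gamma_{\mathrm{rel}}>0$ and $\lambda>0$. For each integer $n\ge1$, there exists a nontrivial solution $M$ to problem $(P_n)$ if and only if $\lambda=\lambda_n^*$, where $\lambda_n^*$ satisfies $$\frac{g[\![\rho]\!]}{n}=\Gamma_{\mathrm{rel}}^2\coth\Big(\frac{np_1}{\Gamma_{\mathrm{rel}}}\Big)-(\lambda_n^* )^2\coth\Big(\frac{n(p_1-p_0)}{\lambda_n^*}\Big).$$ Such a $\lambda_n^*>0$ exists if and only if $$\frac{g[\![\rho]\!]}{n}-\Gamma_{\mathrm{rel}}^2\coth\Big(\frac{np_1}{\Gamma_{\mathrm{rel}}}\Big)<0,$$ and if it exists it is unique. In that case the space of solutions of $(P_n)$ with $\lambda=\lambda_n^*$ is one-dimensional and spanned by $$M_n^*(p)=\begin{cases}\sinh\big(\frac{np}{\Gamma_{\mathrm{rel}}}\big), & p_1<p<0,\\ \mu\sinh\big(\frac{n(p-p_0)}{\lambda_n^*}\big), & p_0<p<p_1,\end{cases}\qquad \mu=\frac{\sinh\big(\frac{np_1}{\Gamma_{\mathrm{rel}}}\big)}{\sinh\big(\frac{n(p_1-p_0)}{\lambda_n^*}\big)} .$$ Finally, there are nontrivial solutions to $(P_0)$ if and only if $\lambda=\lambda_0$, where $\lambda_0^3=-g[\![\rho]\!](p_1-p_0)$.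
   Context: Let $a_\lambda(p)=\Gamma_{\mathrm{rel}}$ for $p_1<p<0$ and $a_\lambda(p)=\lambda$ for $p_0<p<p_1$. For $f$ defined on both sides of $p_1$, $[\![f]\!]=f(p_1^+)-f(p_1^-)$. Problem $(P_n)$, $n\ge1$: find $M\in C([p_0,0])$, $C^2$ on $[p_0,p_1]$ and on $[p_1,0]$, with $a_\lambda^2M_{pp}=n^2M$ on $(p_0,p_1)\cup(p_1,0)$, $[\![a_\lambda^3M_p]\!]=g[\![\rho]\!]M(p_1)$, $M(p_0)=0$, $M(0)=0$. Problem $(P_0)$: same regularity, with $a_\lambda^2M_{pp}=0$ on $(p_0,p_1)\cup(p_1,0)$, $[\![a_\lambda^3M_p]\!]=g[\![\rho]\!]M(p_1)$, $M(p_0)=0$, $M(0)=M(p_1)$. *)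

From Stdlib Require Import Reals.
From Coquelicot Require Import Coquelicot.
Open Scope R_scope.

Definition coth (x : R) : R := cosh x / sinh x.

(** F is a C^2 function on all of R. A function is "C^2 on the closed
    interval [a,b]" iff it is the restriction to [a,b] of such an F
    (one-sided derivatives at the endpoints are then Derive F a, Derive F b). *)
Definition C2_global (F : R -> R) : Prop :=
  (forall x, ex_derive F x) /\
  (forall x, ex_derive (Derive F) x) /\
  (forall x, continuous (Derive (Derive F)) x).

Definition a_lam (Grel lam p1 p : R) : R := if Rlt_dec p1 p then Grel else lam.

(** M solves (P_n) (n >= 1) with parameters g, jump [[rho]] = J,
    Gamma_rel = Grel, lambda = lam, p0, p1.
    FL, FR are C^2 extensions of M restricted to [p0,p1] and [p1,0];
    Derive FR p1 = M_p(p1^+), Derive FL p1 = M_p(p1^-).  *)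
Definition solves_Pn (g J Grel lam p0 p1 : R) (n : nat) (M : R -> R) : Prop :=
  exists FL FR : R -> R,
    C2_global FL /\ C2_global FR /\
    (forall p, p0 <= p <= p1 -> FL p = M p) /\
    (forall p, p1 <= p <= 0 -> FR p = M p) /\
    (forall p, p0 < p < p1 ->
        (a_lam Grel lam p1 p) ^ 2 * Derive (Derive FL) p = (INR n) ^ 2 * M p) /\
    (forall p, p1 < p < 0 ->
        (a_lam Grel lam p1 p) ^ 2 * Derive (Derive FR) p = (INR n) ^ 2 * M p) /\
    Grel ^ 3 * Derive FR p1 - lam ^ 3 * Derive FL p1 = g * J * M p1 /\
    M p0 = 0 /\ M 0 = 0.

Definition solves_P0 (g J Grel lam p0 p1 : R) (M : R -> R) : Prop :=
  exists FL FR : R -> R,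
    C2_global FL /\ C2_global FR /\
    (forall p, p0 <= p <= p1 -> FL p = M p) /\
    (forall p, p1 <= p <= 0 -> FR p = M p) /\
    (forall p, p0 < p < p1 ->
        (a_lam Grel lam p1 p) ^ 2 * Derive (Derive FL) p = 0) /\
    (forall p, p1 < p < 0 ->
        (a_lam Grel lam p1 p) ^ 2 * Derive (Derive FR) p = 0) /\
    Grel ^ 3 * Derive FR p1 - lam ^ 3 * Derive FL p1 = g * J * M p1 /\
    M p0 = 0 /\ M 0 = M p1.

Definition nontrivial (p0 : R) (M : R -> R) : Prop :=
  exists p, p0 <= p <= 0 /\ M p <> 0.

Definition disp_eq (g J Grel p0 p1 : R) (n : nat) (lam : R) : Prop :=
  g * J / INR n = Grel ^ 2 * coth (INR n * p1 / Grel)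
                  - lam ^ 2 * coth (INR n * (p1 - p0) / lam).

Definition Mstar (Grel p0 p1 : R) (n : nat) (lam : R) (p : R) : R :=
  let mu := sinh (INR n * p1 / Grel) / sinh (INR n * (p1 - p0) / lam) in
  if Rle_dec p1 p then sinh (INR n * p / Grel)
  else mu * sinh (INR n * (p - p0) / lam).

(** The equation [a_lambda^2 M'' = n^2 M] forces [M] to be a multiple of
    [sinh (n p / Gamma_rel)] on [[p1,0]] and of [sinh (n (p - p0) / lambda)] on
    [[p0,p1]]; continuity at [p1] fixes the ratio [mu], and the jump condition
    is then a scalar equation which, for a nonzero multiple, is exactly the
    dispersion relation.  Writing it as
    [f lambda = Gamma_rel^2 coth (n p1 / Gamma_rel) - g [[rho]] / n] with
    [f lambda = lambda^2 coth (c / lambda)], [c = n (p1 - p0) > 0], the map [f] is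
    continuous, strictly increasing, squeezed between [lambda^2] and
    [lambda^2 + lambda^3 / c], hence a bijection of [(0,+oo)] onto itself.
    For [n = 0] both pieces are affine, and the jump condition reduces to
    [lambda^3 = - g [[rho]] (p1 - p0)]. *)

From Stdlib Require Import Reals Lra Lia.
From Coquelicot Require Import Coquelicot.
Open Scope R_scope.

Lemma sinh_pos x : 0 < x -> 0 < sinh x.
Proof. intros Hx; rewrite <- sinh_0; now apply sinh_lt. Qed.

Lemma sinh_neg x : x < 0 -> sinh x < 0.
Proof. intros Hx; rewrite <- sinh_0; now apply sinh_lt. Qed.

Lemma coth_exp x : x <> 0 -> coth x = (exp x ^ 2 + 1) / (exp x ^ 2 - 1).
Proof.
  intros Hx. unfold coth, cosh, sinh. rewrite exp_Ropp.
  assert (Hpos : 0 < exp x) by apply exp_pos.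
  assert (Hne1 : exp x <> 1).
  { rewrite <- exp_0. intros E. apply Hx, exp_inv, E. }
  assert (exp x ^ 2 - 1 <> 0).
  { replace (exp x ^ 2 - 1) with ((exp x - 1) * (exp x + 1)) by ring.
    apply Rmult_integral_contrapositive; split; lra. }
  field. split; lra.
Qed.

Lemma coth_gt1 x : 0 < x -> 1 < coth x.
Proof.
  intros Hx. rewrite coth_exp by lra.
  assert (1 < exp x) by (rewrite <- exp_0; apply exp_increasing, Hx).
  apply Rlt_div_r; nra.
Qed.

Lemma coth_lt_1_plus_inv x : 0 < x -> coth x < 1 + / x.
Proof.
  intros Hx. rewrite coth_exp by lra.
  assert (E : exp x ^ 2 = exp (2 * x)) by (replace (2 * x) with (x + x) by ring; rewrite exp_plus; ring).
  assert (1 + 2 * x < exp (2 * x)) by (apply exp_ineq1; lra).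
  rewrite E. apply Rlt_div_l; [lra|].
  apply (Rmult_lt_reg_l x); [exact Hx|].
  replace (x * ((1 + / x) * (exp (2 * x) - 1)))
    with ((x + 1) * (exp (2 * x) - 1)) by (field; lra).
  nra.
Qed.

Lemma coth_decreasing x y : 0 < x -> x < y -> coth y < coth x.
Proof.
  intros Hx Hxy. rewrite !coth_exp by lra.
  assert (1 < exp x) by (rewrite <- exp_0; apply exp_increasing, Hx).
  assert (exp x < exp y) by (apply exp_increasing, Hxy).
  assert (0 < exp x ^ 2 - 1) by nra.
  assert (exp x ^ 2 - 1 < exp y ^ 2 - 1) by nra.
  replace ((exp y ^ 2 + 1) / (exp y ^ 2 - 1)) with (1 + 2 * / (exp y ^ 2 - 1)) by (field; lra).
  replace ((exp x ^ 2 + 1) / (exp x ^ 2 - 1)) with (1 + 2 * / (exp x ^ 2 - 1)) by (field; lra).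
  assert (/ (exp y ^ 2 - 1) < / (exp x ^ 2 - 1)) by (apply Rinv_lt_contravar; nra).
  lra.
Qed.

Definition dispersion_fun (c l : R) : R := l ^ 2 * coth (c / l).

Section DispersionFun.

Variable c : R.
Hypothesis c_pos : 0 < c.

Lemma dispersion_fun_gt_sq l : 0 < l -> l ^ 2 < dispersion_fun c l.
Proof.
  intros Hl. unfold dispersion_fun.
  assert (1 < coth (c / l)) by (apply coth_gt1, Rdiv_lt_0_compat; lra).
  assert (0 < l ^ 2) by (apply pow_lt, Hl).
  nra.
Qed.

Lemma dispersion_fun_lt l : 0 < l -> dispersion_fun c l < l ^ 2 + l ^ 3 / c.
Proof.
  intros Hl. unfold dispersion_fun.
  assert (H : coth (c / l) < 1 + / (c / l)) by (apply coth_lt_1_plus_inv, Rdiv_lt_0_compat; lra).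
  replace (l ^ 2 + l ^ 3 / c) with (l ^ 2 * (1 + / (c / l))) by (field; lra).
  apply Rmult_lt_compat_l; [apply pow_lt|]; assumption.
Qed.

Lemma dispersion_fun_increasing l l' :
  0 < l -> l < l' -> dispersion_fun c l < dispersion_fun c l'.
Proof.
  intros Hl Hll. unfold dispersion_fun.
  assert (c / l' < c / l) by (apply Rmult_lt_compat_l; [|apply Rinv_lt_contravar]; nra).
  assert (coth (c / l) < coth (c / l')) by (apply coth_decreasing; [apply Rdiv_lt_0_compat|]; lra).
  assert (1 < coth (c / l)) by (apply coth_gt1, Rdiv_lt_0_compat; lra).
  assert (l ^ 2 < l' ^ 2) by nra.
  nra.
Qed.

Lemma dispersion_fun_injective l l' :
  0 < l -> 0 < l' -> dispersion_fun c l = dispersion_fun c l' -> l = l'.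
Proof.
  intros Hl Hl' E.
  destruct (Rtotal_order l l') as [H|[H|H]]; [|exact H|].
  - pose proof (dispersion_fun_increasing l l' Hl H). lra.
  - pose proof (dispersion_fun_increasing l' l Hl' H). lra.
Qed.

Lemma dispersion_fun_continuous l : 0 < l -> continuity_pt (dispersion_fun c) l.
Proof.
  intros Hl. apply continuity_pt_filterlim.
  apply (ex_derive_continuous (K:=R_AbsRing) (V:=R_NormedModule)).
  assert (0 < sinh (c / l)) by (apply sinh_pos, Rdiv_lt_0_compat; lra).
  unfold dispersion_fun, coth. auto_derive. repeat split; lra.
Qed.

Lemma dispersion_fun_range T :
  (exists l, 0 < l /\ dispersion_fun c l = T) <-> 0 < T.
Proof.
  split.
  - intros [l [Hl <-]]. pose proof (dispersion_fun_gt_sq l Hl).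
    assert (0 < l ^ 2) by (apply pow_lt, Hl). lra.
  - intros HT.
    (* [l0 <= 1] and [l0 (1 + 1/c) <= T/2] give [f l0 < l0^2 + l0^3/c <= T/2]. *)
    set (l0 := Rmin 1 (T / (2 * (1 + / c)))).
    assert (Hic : 0 < / c) by (apply Rinv_0_lt_compat, c_pos).
    assert (Hq : 0 < T / (2 * (1 + / c))) by (apply Rdiv_lt_0_compat; lra).
    assert (Hl0 : 0 < l0) by (apply Rmin_glb_lt; lra).
    assert (Hl01 : l0 <= 1) by apply Rmin_l.
    assert (Hl0T : l0 * (1 + / c) <= T / 2).
    { replace (T / 2) with (T / (2 * (1 + / c)) * (1 + / c)) by (field; lra).
      apply Rmult_le_compat_r; [lra|apply Rmin_r]. }
    assert (Hlow : dispersion_fun c l0 < T).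
    { pose proof (dispersion_fun_lt l0 Hl0).
      assert (l0 ^ 2 + l0 ^ 3 / c <= l0 * (1 + / c)).
      { unfold Rdiv. assert (l0 ^ 2 <= l0) by (simpl; nra).
        assert (l0 ^ 3 <= l0) by (simpl; nra). nra. }
      lra. }
    assert (Hhigh : T < dispersion_fun c (T + 1)).
    { pose proof (dispersion_fun_gt_sq (T + 1)). nra. }
    destruct (Ranalysis5.IVT_interv (fun l => dispersion_fun c l - T) l0 (T + 1))
      as [z [Hz Hfz]].
    + intros x Hx. apply continuity_pt_minus.
      * apply dispersion_fun_continuous; lra.
      * apply continuity_pt_const. intros u v; reflexivity.
    + lra.
    + lra.
    + lra.
    + exists z. split; lra.
Qed.

End DispersionFun.

Lemma disp_eq_iff_dispersion_fun g J Grel p0 p1 n lam :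
  disp_eq g J Grel p0 p1 n lam <->
  dispersion_fun (INR n * (p1 - p0)) lam
    = Grel ^ 2 * coth (INR n * p1 / Grel) - g * J / INR n.
Proof. unfold disp_eq, dispersion_fun. split; intros; lra. Qed.

Lemma Derive_zero_constant (f : R -> R) (a b : R) :
  (forall x, ex_derive f x) -> (forall x, a < x < b -> Derive f x = 0) ->
  forall x, a <= x <= b -> f x = f a.
Proof.
  intros Hd H0 x Hx.
  destruct (Req_dec x a) as [->|Hne]; [reflexivity|].
  destruct (MVT_gen f a x (fun _ => 0)) as [c [_ Hc]].
  - intros y Hy. rewrite Rmin_left in Hy by lra. rewrite Rmax_right in Hy by lra.
    rewrite <- (H0 y) by lra. apply Derive_correct, Hd.
  - intros y _. apply continuity_pt_filterlim.
    apply (ex_derive_continuous (K:=R_AbsRing) (V:=R_NormedModule)), Hd.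
  - lra.
Qed.

Lemma affine_solution_ode (F : R -> R) (a b : R) :
  C2_global F -> (forall p, a < p < b -> Derive (Derive F) p = 0) ->
  forall p, a <= p <= b -> F p = F a + Derive F a * (p - a) /\ Derive F p = Derive F a.
Proof.
  intros [H1 [H2 _]] H0.
  assert (Hslope : forall p, a <= p <= b -> Derive F p = Derive F a)
    by (apply Derive_zero_constant; assumption).
  set (G := fun p => F p - Derive F a * p).
  assert (HG : forall p, is_derive G p (Derive F p - Derive F a)).
  { intros p; unfold G. auto_derive; [apply H1|]. change (fun x => F x) with F. ring. }
  assert (HGa : forall p, a <= p <= b -> G p = G a).
  { apply Derive_zero_constant; [intros x; eexists; apply HG|].
    intros x Hx. rewrite (is_derive_unique _ _ _ (HG x)), Hslope; [ring|lra]. }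
  intros p Hp. specialize (HGa p Hp). unfold G in HGa. split; [lra|auto].
Qed.

Lemma exp_solution_ode (F : R -> R) (k a b c : R) :
  C2_global F -> 0 < k ->
  (forall p, a < p < b -> Derive (Derive F) p = k ^ 2 * F p) ->
  exists al be, forall p, a <= p <= b ->
    F p = al * exp (k * (p - c)) + be * exp (- (k * (p - c))) /\
    Derive F p = k * al * exp (k * (p - c)) - k * be * exp (- (k * (p - c))).
Proof.
  intros [H1 [H2 _]] Hk Hode.
  (* [(F' + k F) e^(-k p)] and [(F' - k F) e^(k p)] have zero derivative. *)
  set (P := fun p => (Derive F p + k * F p) * exp (- (k * (p - c)))).
  set (Q := fun p => (Derive F p - k * F p) * exp (k * (p - c))).
  assert (HP : forall p, is_derive P p
    ((Derive (Derive F) p - k ^ 2 * F p) * exp (- (k * (p - c))))).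
  { intros p. unfold P. auto_derive; repeat split; auto.
    change (fun x => Derive F x) with (Derive F); change (fun x => F x) with F.
    unfold Rminus; ring. }
  assert (HQ : forall p, is_derive Q p
    ((Derive (Derive F) p - k ^ 2 * F p) * exp (k * (p - c)))).
  { intros p. unfold Q. auto_derive; repeat split; auto.
    change (fun x => Derive F x) with (Derive F); change (fun x => F x) with F.
    unfold Rminus; ring. }
  assert (CP : forall x, a <= x <= b -> P x = P a).
  { apply Derive_zero_constant; [intros x; eexists; apply HP|].
    intros x Hx; rewrite (is_derive_unique _ _ _ (HP x)), (Hode x Hx); ring. }
  assert (CQ : forall x, a <= x <= b -> Q x = Q a).
  { apply Derive_zero_constant; [intros x; eexists; apply HQ|].
    intros x Hx; rewrite (is_derive_unique _ _ _ (HQ x)), (Hode x Hx); ring. }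
  exists (P a / (2 * k)), (- Q a / (2 * k)).
  intros p Hp. rewrite <- (CP p Hp), <- (CQ p Hp).
  unfold P, Q. rewrite exp_Ropp.
  assert (exp (k * (p - c)) > 0) by apply exp_pos.
  split; field; lra.
Qed.

Lemma sinh_solution_ode (F : R -> R) (k a b c : R) :
  C2_global F -> 0 < k ->
  (forall p, a < p < b -> Derive (Derive F) p = k ^ 2 * F p) ->
  a <= c <= b -> F c = 0 ->
  exists A, forall p, a <= p <= b ->
    F p = A * sinh (k * (p - c)) /\ Derive F p = A * k * cosh (k * (p - c)).
Proof.
  intros HF Hk Hode Hc HFc.
  destruct (exp_solution_ode F k a b c HF Hk Hode) as [al [be Hsol]].
  assert (Hbe : be = - al).
  { destruct (Hsol c Hc) as [E _]. rewrite HFc in E.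
    replace (k * (c - c)) with 0 in E by ring. rewrite Ropp_0, exp_0 in E. lra. }
  exists (2 * al). intros p Hp. destruct (Hsol p Hp) as [EF EdF].
  rewrite EF, EdF, Hbe. unfold sinh, cosh. split; field.
Qed.

Lemma C2_global_of_derivatives (f f1 f2 : R -> R) :
  (forall x, is_derive f x (f1 x)) -> (forall x, is_derive f1 x (f2 x)) ->
  (forall x, continuous f2 x) ->
  C2_global f /\ (forall x, Derive f x = f1 x) /\ (forall x, Derive (Derive f) x = f2 x).
Proof.
  intros D1 D2 C.
  assert (E1 : forall x, Derive f x = f1 x) by (intros x; apply is_derive_unique, D1).
  assert (E2 : forall x, Derive (Derive f) x = f2 x).
  { intros x. rewrite (Derive_ext _ _ _ E1). apply is_derive_unique, D2. }
  split; [|split; assumption]. split; [|split].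
  - intros x. eexists. apply D1.
  - intros x. eexists. apply (is_derive_ext f1); [intros t; symmetry; apply E1|apply D2].
  - intros x. apply (continuous_ext f2); [intros t; symmetry; apply E2|apply C].
Qed.

Lemma C2_global_sinh (A k c : R) :
  C2_global (fun p => A * sinh (k * (p - c))) /\
  (forall p, Derive (fun p => A * sinh (k * (p - c))) p = A * k * cosh (k * (p - c))) /\
  (forall p, Derive (Derive (fun p => A * sinh (k * (p - c)))) p
             = k ^ 2 * (A * sinh (k * (p - c)))).
Proof.
  apply C2_global_of_derivatives.
  - intros p. unfold sinh, cosh. auto_derive; auto. unfold Rminus; field.
  - intros p. unfold sinh, cosh. auto_derive; auto. unfold Rminus; field.
  - intros p. apply (ex_derive_continuous (K:=R_AbsRing) (V:=R_NormedModule)).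
    unfold sinh. auto_derive; auto.
Qed.

Lemma C2_global_affine (A B : R) :
  C2_global (fun p => A * p + B) /\ (forall p, Derive (fun p => A * p + B) p = A) /\
  (forall p, Derive (Derive (fun p => A * p + B)) p = 0).
Proof.
  apply C2_global_of_derivatives.
  - intros p. auto_derive; auto. ring.
  - intros p. auto_derive; auto.
  - intros p. apply continuous_const.
Qed.

Section ProblemPn.

Variables (g J Grel lam p0 p1 : R) (n : nat).
Hypotheses (p0_lt_p1 : p0 < p1) (p1_neg : p1 < 0) (Grel_pos : 0 < Grel)
  (lam_pos : 0 < lam) (n_ge1 : (1 <= n)%nat).

Lemma INR_n_pos : 0 < INR n.
Proof. apply lt_0_INR; lia. Qed.

Lemma sinh_right_neg : sinh (INR n * p1 / Grel) < 0.
Proof.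
  pose proof INR_n_pos. apply sinh_neg, Rdiv_neg_pos; [nra|exact Grel_pos].
Qed.

Lemma sinh_left_pos : 0 < sinh (INR n * (p1 - p0) / lam).
Proof.
  pose proof INR_n_pos. apply sinh_pos, Rdiv_lt_0_compat; nra.
Qed.

Lemma Mstar_p1 : Mstar Grel p0 p1 n lam p1 = sinh (INR n * p1 / Grel).
Proof. unfold Mstar. destruct (Rle_dec p1 p1); [reflexivity|lra]. Qed.

Lemma Mstar_jump_factor A :
  let a1 := INR n * p1 / Grel in
  let b1 := INR n * (p1 - p0) / lam in
  let mu := sinh a1 / sinh b1 in
  Grel ^ 3 * (A * (INR n / Grel) * cosh a1)
    - lam ^ 3 * (A * mu * (INR n / lam) * cosh b1) - g * J * (A * sinh a1)
  = A * INR n * sinh a1 * (Grel ^ 2 * coth a1 - lam ^ 2 * coth b1 - g * J / INR n).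
Proof.
  intros a1 b1 mu. pose proof INR_n_pos. pose proof sinh_right_neg. pose proof sinh_left_pos.
  unfold mu, a1, b1, coth. field. repeat split; lra.
Qed.

Lemma disp_eq_iff_residual :
  disp_eq g J Grel p0 p1 n lam <->
  Grel ^ 2 * coth (INR n * p1 / Grel) - lam ^ 2 * coth (INR n * (p1 - p0) / lam)
    - g * J / INR n = 0.
Proof. unfold disp_eq. split; intros; lra. Qed.

Lemma solves_Pn_sinh_pieces M :
  solves_Pn g J Grel lam p0 p1 n M ->
  exists A B,
    (forall p, p1 <= p <= 0 -> M p = A * sinh (INR n * p / Grel)) /\
    (forall p, p0 <= p <= p1 -> M p = B * sinh (INR n * (p - p0) / lam)) /\
    Grel ^ 3 * (A * (INR n / Grel) * cosh (INR n * p1 / Grel))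
      - lam ^ 3 * (B * (INR n / lam) * cosh (INR n * (p1 - p0) / lam)) = g * J * M p1.
Proof.
  intros [FL [FR [CL [CR [EL [ER [OL [OR [Jmp [B0 B1]]]]]]]]]].
  pose proof INR_n_pos.
  destruct (sinh_solution_ode FR (INR n / Grel) p1 0 0 CR) as [A HR].
  { apply Rdiv_lt_0_compat; lra. }
  { intros p Hp. specialize (OR p Hp). unfold a_lam in OR.
    destruct (Rlt_dec p1 p); [|lra]. rewrite <- ER in OR by lra.
    apply (Rmult_eq_reg_l (Grel ^ 2)); [|apply pow_nonzero; lra]. rewrite OR. field. lra. }
  { lra. }
  { rewrite ER by lra. exact B1. }
  destruct (sinh_solution_ode FL (INR n / lam) p0 p1 p0 CL) as [B HL].
  { apply Rdiv_lt_0_compat; lra. }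
  { intros p Hp. specialize (OL p Hp). unfold a_lam in OL.
    destruct (Rlt_dec p1 p); [lra|]. rewrite <- EL in OL by lra.
    apply (Rmult_eq_reg_l (lam ^ 2)); [|apply pow_nonzero; lra]. rewrite OL. field. lra. }
  { lra. }
  { rewrite EL by lra. exact B0. }
  exists A, B. split; [|split].
  - intros p Hp. rewrite <- ER by lra. destruct (HR p Hp) as [-> _].
    do 2 f_equal. field. lra.
  - intros p Hp. rewrite <- EL by lra. destruct (HL p Hp) as [-> _].
    do 2 f_equal. field. lra.
  - rewrite <- Jmp. destruct (HR p1) as [_ ->]; [lra|]. destruct (HL p1) as [_ ->]; [lra|].
    replace (INR n / Grel * (p1 - 0)) with (INR n * p1 / Grel) by (field; lra).
    replace (INR n / lam * (p1 - p0)) with (INR n * (p1 - p0) / lam) by (field; lra).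
    ring.
Qed.

Lemma solves_Pn_multiple_Mstar M :
  solves_Pn g J Grel lam p0 p1 n M ->
  exists A, (forall p, p0 <= p <= 0 -> M p = A * Mstar Grel p0 p1 n lam p) /\
            (A = 0 \/ disp_eq g J Grel p0 p1 n lam).
Proof.
  intros HM. pose proof INR_n_pos. pose proof sinh_right_neg. pose proof sinh_left_pos.
  destruct (solves_Pn_sinh_pieces M HM) as [A [B [MR [ML Jmp]]]].
  set (a1 := INR n * p1 / Grel) in *. set (b1 := INR n * (p1 - p0) / lam) in *.
  assert (HB : B = A * (sinh a1 / sinh b1)).
  { assert (E : B * sinh b1 = A * sinh a1).
    { transitivity (M p1); [symmetry; apply ML|apply MR]; lra. }
    apply (Rmult_eq_reg_r (sinh b1)); [rewrite E; field|]; lra. }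
  exists A. split.
  - intros p Hp. unfold Mstar. fold a1 b1. destruct (Rle_dec p1 p).
    + apply MR; lra.
    + rewrite ML, HB by lra. ring.
  - pose proof (Mstar_jump_factor A) as F. cbv zeta in F. fold a1 b1 in F.
    rewrite <- HB, Jmp, (MR p1), Rminus_diag in F by lra.
    symmetry in F. apply Rmult_integral in F as [F|F].
    + apply Rmult_integral in F as [F|F]; [|lra].
      apply Rmult_integral in F as [F|F]; [left; exact F|lra].
    + right. apply disp_eq_iff_residual. exact F.
Qed.

Lemma multiple_Mstar_solves_Pn M A :
  disp_eq g J Grel p0 p1 n lam ->
  (forall p, p0 <= p <= 0 -> M p = A * Mstar Grel p0 p1 n lam p) ->
  solves_Pn g J Grel lam p0 p1 n M.
Proof.
  intros Hd HM. pose proof INR_n_pos. pose proof sinh_right_neg. pose proof sinh_left_pos.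
  set (a1 := INR n * p1 / Grel) in *. set (b1 := INR n * (p1 - p0) / lam) in *.
  set (mu := sinh a1 / sinh b1).
  destruct (C2_global_sinh (A * mu) (INR n / lam) p0) as [CL [DL DDL]].
  destruct (C2_global_sinh A (INR n / Grel) 0) as [CR [DR DDR]].
  assert (ML : forall p, p0 <= p <= p1 -> A * mu * sinh (INR n / lam * (p - p0)) = M p).
  { intros p Hp. rewrite HM by lra. unfold Mstar. fold a1 b1 mu. cbv zeta.
    destruct (Rle_dec p1 p).
    - assert (p = p1) by lra. subst p. fold a1.
      replace (INR n / lam * (p1 - p0)) with b1 by (unfold b1; field; lra).
      unfold mu. field. lra.
    - replace (INR n / lam * (p - p0)) with (INR n * (p - p0) / lam) by (field; lra). ring. }
  assert (MR : forall p, p1 <= p <= 0 -> A * sinh (INR n / Grel * (p - 0)) = M p).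
  { intros p Hp. rewrite HM by lra. unfold Mstar. destruct (Rle_dec p1 p); [|lra].
    replace (INR n / Grel * (p - 0)) with (INR n * p / Grel) by (field; lra). ring. }
  exists (fun p => A * mu * sinh (INR n / lam * (p - p0))),
         (fun p => A * sinh (INR n / Grel * (p - 0))).
  do 4 (split; [assumption|]). split; [|split; [|split; [|split]]].
  - intros p Hp. rewrite DDL, ML by lra. unfold a_lam.
    destruct (Rlt_dec p1 p); [lra|]. field. lra.
  - intros p Hp. rewrite DDR, MR by lra. unfold a_lam.
    destruct (Rlt_dec p1 p); [|lra]. field. lra.
  - rewrite DL, DR, <- MR by lra.
    replace (INR n / lam * (p1 - p0)) with b1 by (unfold b1; field; lra).
    replace (INR n / Grel * (p1 - 0)) with a1 by (unfold a1; field; lra).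
    apply Rminus_diag_uniq. pose proof (Mstar_jump_factor A) as F. cbv zeta in F.
    fold a1 b1 mu in F. apply disp_eq_iff_residual in Hd. fold a1 b1 in Hd.
    rewrite Hd, Rmult_0_r in F. rewrite <- F. ring.
  - rewrite HM by lra. unfold Mstar. destruct (Rle_dec p1 p0); [lra|]. cbv zeta.
    rewrite Rminus_diag, Rmult_0_r, Rdiv_0_l, sinh_0. ring.
  - rewrite HM by lra. unfold Mstar. destruct (Rle_dec p1 0); [|lra].
    rewrite Rmult_0_r, Rdiv_0_l, sinh_0. ring.
Qed.

Lemma Pn_nontrivial_iff_disp_eq :
  (exists M, solves_Pn g J Grel lam p0 p1 n M /\ nontrivial p0 M) <->
  disp_eq g J Grel p0 p1 n lam.
Proof.
  split.
  - intros [M [HM [p [Hp HMp]]]].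
    destruct (solves_Pn_multiple_Mstar M HM) as [A [HA [A0|Hd]]]; [|exact Hd].
    exfalso. apply HMp. rewrite HA, A0 by exact Hp. ring.
  - intros Hd. exists (Mstar Grel p0 p1 n lam). split.
    + apply (multiple_Mstar_solves_Pn _ 1 Hd). intros; ring.
    + exists p1. split; [lra|]. rewrite Mstar_p1. pose proof sinh_right_neg. lra.
Qed.

Lemma Pn_solutions_span :
  disp_eq g J Grel p0 p1 n lam ->
  forall M, solves_Pn g J Grel lam p0 p1 n M <->
    exists A, forall p, p0 <= p <= 0 -> M p = A * Mstar Grel p0 p1 n lam p.
Proof.
  intros Hd M. split.
  - intros HM. destruct (solves_Pn_multiple_Mstar M HM) as [A [HA _]]. exists A. exact HA.
  - intros [A HA]. exact (multiple_Mstar_solves_Pn M A Hd HA).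
Qed.

End ProblemPn.

Section ProblemP0.

Variables (g J Grel lam p0 p1 : R).
Hypotheses (p0_lt_p1 : p0 < p1) (p1_neg : p1 < 0) (Grel_pos : 0 < Grel)
  (lam_pos : 0 < lam).

Lemma a_lam_sq_mul_eq0 p y : a_lam Grel lam p1 p ^ 2 * y = 0 -> y = 0.
Proof.
  intros E. apply Rmult_integral in E as [E|E]; [|exact E].
  exfalso. revert E. unfold a_lam. destruct (Rlt_dec p1 p); apply pow_nonzero; lra.
Qed.

Lemma solves_P0_affine M :
  solves_P0 g J Grel lam p0 p1 M ->
  exists s, (forall p, p0 <= p <= 0 -> M p = s * (Rmin p p1 - p0)) /\
            s * (lam ^ 3 + g * J * (p1 - p0)) = 0.
Proof.
  intros [FL [FR [CL [CR [EL [ER [OL [OR [Jmp [B0 B1]]]]]]]]]].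
  assert (LL : forall p, p0 <= p <= p1 ->
                 FL p = FL p0 + Derive FL p0 * (p - p0) /\ Derive FL p = Derive FL p0).
  { apply affine_solution_ode; [exact CL|]. intros x Hx.
    exact (a_lam_sq_mul_eq0 x _ (OL x Hx)). }
  assert (LR : forall p, p1 <= p <= 0 ->
                 FR p = FR p1 + Derive FR p1 * (p - p1) /\ Derive FR p = Derive FR p1).
  { apply affine_solution_ode; [exact CR|]. intros x Hx.
    exact (a_lam_sq_mul_eq0 x _ (OR x Hx)). }
  set (s := Derive FL p0) in *.
  assert (FL0 : FL p0 = 0) by (rewrite EL by lra; exact B0).
  (* [M 0 = M p1] forces the right piece to be constant. *)
  assert (HdR : Derive FR p1 = 0).
  { destruct (LR 0) as [E _]; [lra|].
    rewrite !ER, B1 in E by lra. apply (Rmult_eq_reg_r (0 - p1)); lra. }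
  assert (Mp1 : M p1 = s * (p1 - p0)).
  { rewrite <- EL by lra. destruct (LL p1) as [-> _]; [lra|]. rewrite FL0. ring. }
  exists s. split.
  - intros p Hp. destruct (Rle_dec p p1).
    + rewrite Rmin_left, <- EL by lra. destruct (LL p) as [-> _]; [lra|]. rewrite FL0. ring.
    + rewrite Rmin_right, <- Mp1, <- ER, <- (ER p1) by lra.
      destruct (LR p) as [-> _]; [lra|]. rewrite HdR. ring.
  - destruct (LL p1) as [_ Hs]; [lra|].
    rewrite HdR, Hs, Mp1 in Jmp. lra.
Qed.

Lemma P0_profile_solves :
  lam ^ 3 = - g * J * (p1 - p0) -> solves_P0 g J Grel lam p0 p1 (fun p => Rmin p p1 - p0).
Proof.
  intros Hlam.
  destruct (C2_global_affine 1 (- p0)) as [CL [DL DDL]].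
  destruct (C2_global_affine 0 (p1 - p0)) as [CR [DR DDR]].
  exists (fun p => 1 * p + - p0), (fun p => 0 * p + (p1 - p0)).
  do 2 (split; [assumption|]). split; [|split; [|split; [|split; [|split; [|split]]]]].
  - intros p Hp. rewrite Rmin_left by lra. ring.
  - intros p Hp. rewrite Rmin_right by lra. ring.
  - intros p Hp. rewrite DDL. ring.
  - intros p Hp. rewrite DDR. ring.
  - rewrite DL, DR, Rmin_left by lra. rewrite Hlam. ring.
  - rewrite Rmin_left by lra. ring.
  - rewrite Rmin_right, Rmin_left by lra. reflexivity.
Qed.

Lemma P0_nontrivial_iff :
  (exists M, solves_P0 g J Grel lam p0 p1 M /\ nontrivial p0 M) <->
  lam ^ 3 = - g * J * (p1 - p0).
Proof.
  split.
  - intros [M [HM [p [Hp HMp]]]].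
    destruct (solves_P0_affine M HM) as [s [Hs Hjump]].
    assert (s <> 0) by (intros ->; apply HMp; rewrite Hs by exact Hp; ring).
    apply Rmult_integral in Hjump as [|]; lra.
  - intros Hlam. exists (fun p => Rmin p p1 - p0). split.
    + exact (P0_profile_solves Hlam).
    + exists p1. split; [lra|]. rewrite Rmin_left; lra.
Qed.

End ProblemP0.

Theorem lemma3p3 (g p0 p1 J Grel : R) :
  0 < g -> p0 < p1 -> p1 < 0 -> J < 0 -> 0 < Grel ->
  (forall n : nat, (1 <= n)%nat ->
     (forall lam, 0 < lam ->
        ((exists M, solves_Pn g J Grel lam p0 p1 n M /\ nontrivial p0 M)
         <-> disp_eq g J Grel p0 p1 n lam)) /\
     ((exists lam, 0 < lam /\ disp_eq g J Grel p0 p1 n lam)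
      <-> g * J / INR n - Grel ^ 2 * coth (INR n * p1 / Grel) < 0) /\
     (forall lam lam', 0 < lam -> 0 < lam' ->
        disp_eq g J Grel p0 p1 n lam -> disp_eq g J Grel p0 p1 n lam' ->
        lam = lam') /\
     (forall lam, 0 < lam -> disp_eq g J Grel p0 p1 n lam ->
        forall M, solves_Pn g J Grel lam p0 p1 n M <->
          exists c : R, forall p, p0 <= p <= 0 ->
             M p = c * Mstar Grel p0 p1 n lam p)) /\
  (forall lam, 0 < lam ->
     ((exists M, solves_P0 g J Grel lam p0 p1 M /\ nontrivial p0 M)
      <-> lam ^ 3 = - g * J * (p1 - p0))).
Proof.
  intros _ Hp01 Hp1 _ HG. split; [intros n Hn|intros lam Hl; now apply P0_nontrivial_iff].
  set (c := INR n * (p1 - p0)).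
  assert (Hc : 0 < c) by (pose proof (INR_n_pos n Hn); unfold c; nra).
  split; [|split; [|split]].
  - intros lam Hl. now apply Pn_nontrivial_iff_disp_eq.
  - set (T := Grel ^ 2 * coth (INR n * p1 / Grel) - g * J / INR n).
    transitivity (exists lam, 0 < lam /\ dispersion_fun c lam = T).
    + split; intros [lam [Hl Hd]]; exists lam; split; try exact Hl;
        now apply disp_eq_iff_dispersion_fun.
    + rewrite (dispersion_fun_range c Hc). unfold T. split; intros; lra.
  - intros lam lam' Hl Hl' Hd Hd'. apply (dispersion_fun_injective c Hc); try assumption.
    apply disp_eq_iff_dispersion_fun in Hd, Hd'. fold c in Hd, Hd'. congruence.
  - intros lam Hl Hd. now apply Pn_solutions_span.
Qed.
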